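(* Let $X$, $Y$ be disjoint sets of cardinality at least two, $M\le\mathrm{Sym}(X)$ and $N\le\mathrm{Sym}(Y)$ nontrivial permutation groups, $T$ the $(|X|,|Y|)$-biregular tree and $c$ a legal colouring. Suppose $v_1,v_2\in V_X$ and $w_1,w_2\in V_Y$, with $\{v_1,w_1\}$ and $\{v_2,w_2\}$ edges of $T$. Then these two edges lie in the same orbit of $U_c(M,N)$ if and only if $v_1,v_2$ lie in the same orbit of $U_c(M,N)$ and $w_1,w_2$ lie in the same orbit of $U_c(M,N)$.
   Context: $T$ has natural bipartition $VT=V_X\sqcup V_Y$ (vertices in $V_X$ have valency $|X|$, in $V_Y$ valency $|Y|$). $A(v)$, $\overline{A}(v)$ are the sets of arcs with origin, resp. terminus, $v$. A legal colouring is a map $c:AT\to X\cup Y$ restricting to a bijection $A(v)\to X$ for $v\in V_X$, to a bijection $A(v)\to Y$ for $v\in V_Y$, and constant on each $\overline{A}(v)$. $U_c(M,N)$ is the group of $g\in\mathrm{Aut}(T)$ with $gV_X=V_X$ and $c|_{A(gv)}\circ g|_{A(v)}\circ(c|_{A(v)})^{-1}$ in $M$ for $v\in V_X$ and in $N$ for $v\in V_Y$. *)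

From Stdlib Require Import List.
Import ListNotations.
Set Implicit Arguments.

Fixpoint chain {V : Type} (adj : V -> V -> Prop) (v : V) (q : list V) : Prop :=
  match q with
  | nil => True
  | w :: q' => adj v w /\ chain adj w q'
  end.

(* a (simple) cycle of length >= 3 *)
Definition has_cycle {V : Type} (adj : V -> V -> Prop) : Prop :=
  exists (v : V) (q : list V),
    2 <= length q /\ NoDup (v :: q) /\ chain adj v q /\ adj (last q v) v.

Definition connected {V : Type} (adj : V -> V -> Prop) : Prop :=
  forall u w : V, exists q : list V, chain adj u q /\ last q u = w.

Definition is_tree {V : Type} (adj : V -> V -> Prop) : Prop :=
  (forall u w, adj u w -> adj w u) /\ (forall u, ~ adj u u) /\
  connected adj /\ ~ has_cycle adj.

(* VX is a bipartition class of the tree, V_Y being its complement: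
   every edge joins a vertex of V_X with a vertex of V_Y *)
Definition bipartition {V : Type} (adj : V -> V -> Prop) (VX : V -> Prop) : Prop :=
  forall u w, adj u w -> (VX u <-> ~ VX w).

Definition perm_group {X : Type} (M : (X -> X) -> Prop) : Prop :=
  M (fun x => x) /\
  (forall f g, M f -> M g -> M (fun x => f (g x))) /\
  (forall f, M f -> exists h, M h /\ (forall x, h (f x) = x) /\ (forall x, f (h x) = x)).

Definition nontrivial_group {X : Type} (M : (X -> X) -> Prop) : Prop :=
  exists f, M f /\ exists x, f x <> x.

(* Arcs are ordered pairs (v, w) with adj v w; a colouring assigns to each arc
   (v, w) the colour c v w in the disjoint union X + Y. *)
Definition legal_colouring {V X Y : Type} (adj : V -> V -> Prop) (VX : V -> Prop)
  (c : V -> V -> X + Y) : Prop :=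
  (forall v, VX v ->
     (forall w, adj v w -> exists x, c v w = inl x) /\
     (forall w w', adj v w -> adj v w' -> c v w = c v w' -> w = w') /\
     (forall x, exists w, adj v w /\ c v w = inl x)) /\
  (forall v, ~ VX v ->
     (forall w, adj v w -> exists y, c v w = inr y) /\
     (forall w w', adj v w -> adj v w' -> c v w = c v w' -> w = w') /\
     (forall y, exists w, adj v w /\ c v w = inr y)) /\
  (forall v u u', adj u v -> adj u' v -> c u v = c u' v).

Definition is_aut {V : Type} (adj : V -> V -> Prop) (g : V -> V) : Prop :=
  (exists h : V -> V, (forall v, h (g v) = v) /\ (forall v, g (h v) = v)) /\
  (forall u w, adj u w <-> adj (g u) (g w)).

Definition U_c {V X Y : Type} (adj : V -> V -> Prop) (VX : V -> Prop)
  (c : V -> V -> X + Y) (M : (X -> X) -> Prop) (N : (Y -> Y) -> Prop)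
  (g : V -> V) : Prop :=
  is_aut adj g /\
  (forall v, VX (g v) <-> VX v) /\
  (* local action c|A(gv) o g|A(v) o (c|A(v))^-1 lies in M, for v in V_X *)
  (forall v, VX v -> exists s, M s /\
      forall w x, adj v w -> c v w = inl x -> c (g v) (g w) = inl (s x)) /\
  (* ... and in N, for v in V_Y *)
  (forall v, ~ VX v -> exists s, N s /\
      forall w y, adj v w -> c v w = inr y -> c (g v) (g w) = inr (s y)).

(* The forward direction holds because U_c(M,N) preserves V_X. Conversely, let
   g1 v1 = v2 and g2 w1 = w2, let x be the colour of the arc (v1, w1) and s1, s2
   in M the local actions of g1, g2 at v1. As the colour of an arc only depends
   on its terminus, the arcs (v2, g1 w1) and (v2, w2) have colours s1 x and s2 x.
   So it suffices to find h in U_c(M,N) fixing v2 whose local action at v2 is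
   s2 s1^-1; then h g1 maps the edge {v1, w1} to {v2, w2}. In a tree such an h is
   obtained by transporting the geodesic from each vertex to v2 arc by arc,
   permuting X-colours by s2 s1^-1 and keeping Y-colours. *)

From Stdlib Require Import List Lia Classical ClassicalEpsilon.
Import ListNotations.
Set Implicit Arguments.
Unset Strict Implicit.

Lemma last_cons_default {A : Type} (a : A) l d d' : last (a :: l) d = last (a :: l) d'.
Proof. revert a; induction l as [|b l IH]; intros a; [reflexivity|apply (IH b)]. Qed.

Lemma In_last_cons {A : Type} (a : A) l d : In (last (a :: l) d) (a :: l).
Proof.
  revert a; induction l as [|b l IH]; intros a; [now left|].
  right. apply (IH b).
Qed.

Lemma NoDup_app_disjoint {A : Type} (l m : list A) x :
  NoDup (l ++ m) -> In x l -> In x m -> False.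
Proof.
  induction l as [|a l IH]; simpl; [tauto|].
  intros Hnd [<-|Hl] Hm; inversion Hnd; subst; eauto using in_or_app.
Qed.

Section Walks.

Variable V : Type.

(* no immediate backtracking: [l_i <> l_(i+2)] *)
Fixpoint reduced (l : list V) : Prop :=
  match l with a :: ((_ :: d :: _) as t) => a <> d /\ reduced t | _ => True end.

Lemma reduced_tail a l : reduced (a :: l) -> reduced l.
Proof. destruct l as [|b [|d l]]; simpl; tauto. Qed.

Lemma reduced_app l1 x y l2 :
  reduced (l1 ++ x :: y :: l2) <-> reduced (l1 ++ [x; y]) /\ reduced (x :: y :: l2).
Proof.
  induction l1 as [|a l1 IH]; simpl; [tauto|].
  destruct l1 as [|b [|d l1]]; simpl in *; [tauto| |]; rewrite IH; tauto.
Qed.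

Lemma reduced_prefix l1 l2 : reduced (l1 ++ l2) -> reduced l1.
Proof.
  induction l1 as [|a [|b [|d l1]] IH]; simpl in *; tauto.
Qed.

Lemma reduced_rev l : reduced l -> reduced (rev l).
Proof.
  induction l as [|a [|b [|d l]] IH]; simpl; auto.
  intros [Had Hl]. specialize (IH Hl). simpl in IH.
  rewrite <- !app_assoc. apply reduced_app. split.
  - rewrite <- app_assoc in IH. exact IH.
  - simpl. auto.
Qed.

Variable adj : V -> V -> Prop.

Fixpoint walk (l : list V) : Prop :=
  match l with a :: ((b :: _) as t) => adj a b /\ walk t | _ => True end.

Lemma walk_tail a l : walk (a :: l) -> walk l.
Proof. destruct l; simpl; tauto. Qed.

Lemma chain_walk v q : chain adj v q <-> walk (v :: q).
Proof.
  revert v; induction q as [|w q IH]; intros v; simpl; [tauto|].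
  rewrite IH. tauto.
Qed.

Lemma walk_app l1 x l2 :
  walk (l1 ++ x :: l2) <-> walk (l1 ++ [x]) /\ walk (x :: l2).
Proof.
  induction l1 as [|a [|b l1] IH]; simpl in *; [tauto|tauto|].
  rewrite IH. tauto.
Qed.

Lemma walk_snoc a l x : walk (a :: l ++ [x]) <-> walk (a :: l) /\ adj (last l a) x.
Proof.
  revert a; induction l as [|b l IH]; intros a; [simpl; tauto|].
  change (adj a b /\ walk (b :: l ++ [x]) <-> (adj a b /\ walk (b :: l)) /\
          adj (last (b :: l) a) x).
  rewrite IH. destruct l as [|d l]; [simpl; tauto|].
  change (last (b :: d :: l) a) with (last (d :: l) a).
  rewrite (last_cons_default d l a b). simpl. tauto.
Qed.

Lemma walk_rev (adj_sym : forall u w, adj u w -> adj w u) l :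
  walk l -> walk (rev l).
Proof.
  induction l as [|a [|b l] IH]; simpl; auto.
  intros [Hab Hl]. specialize (IH Hl). simpl in IH.
  rewrite <- app_assoc. apply walk_app. simpl. auto.
Qed.

End Walks.

Section Geodesics.

Variables (V : Type) (adj : V -> V -> Prop).
Hypothesis tree : is_tree adj.

Lemma closed_reduced_walk_false a t :
  walk adj (a :: t ++ [a]) -> reduced (a :: t ++ [a]) -> NoDup (a :: t) -> False.
Proof.
  destruct tree as [_ [loopless [_ acyclic]]].
  intros Hw Hr Hnd. destruct t as [|b [|d t]].
  - apply (loopless a). simpl in Hw. tauto.
  - simpl in Hr. tauto.
  - apply walk_snoc in Hw as [Hw Hlast].
    apply acyclic. exists a, (b :: d :: t).
    split; [simpl; lia|]. split; [exact Hnd|].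
    split; [apply chain_walk; exact Hw|exact Hlast].
Qed.

Lemma reduced_walk_NoDup l : walk adj l -> reduced l -> NoDup l.
Proof.
  induction l as [|a t IH]; intros Hw Hr; [constructor|].
  assert (Hnd : NoDup t) by (apply IH; [exact (walk_tail Hw)|exact (reduced_tail Hr)]).
  constructor; [|exact Hnd].
  intro Ha. apply in_split in Ha as [t1 [t2 ->]].
  apply (closed_reduced_walk_false (a := a) (t := t1)).
  - change (walk adj ((a :: t1) ++ a :: t2)) in Hw. apply walk_app in Hw. apply Hw.
  - apply (reduced_prefix (l2 := t2)). simpl. rewrite <- app_assoc. exact Hr.
  - constructor.
    + intro Ha. apply (NoDup_remove_2 _ _ _ Hnd), in_or_app. now left.
    + exact (NoDup_app_remove_r _ _ Hnd).
Qed.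

(* [l] is a reduced walk ending at [v0]; the default of [last] lets [[]] qualify. *)
Definition geodesic (v0 : V) (l : list V) : Prop :=
  walk adj l /\ reduced l /\ last l v0 = v0.

Lemma geodesic_tail v0 a l : geodesic v0 (a :: l) -> geodesic v0 l.
Proof.
  intros [Hw [Hr Hl]]. split; [exact (walk_tail Hw)|split; [exact (reduced_tail Hr)|]].
  destruct l; [reflexivity|exact Hl].
Qed.

Lemma walk_shorten_geodesic v0 l u :
  walk adj (u :: l) -> last (u :: l) v0 = v0 -> exists t, geodesic v0 (u :: t).
Proof.
  revert u; induction l as [|a l IH]; intros u Hw Hl.
  - exists []. repeat split. exact Hl.
  - destruct Hw as [Hua Hw].
    destruct (IH a Hw Hl) as [[|b t] Hg].
    + exists [a]. destruct Hg as [_ [_ Ha]]. repeat split; assumption.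
    + destruct (classic (b = u)) as [->|Hbu].
      * exists t. exact (geodesic_tail Hg).
      * exists (a :: b :: t). destruct Hg as [Hw' [Hr' Hl']].
        split; [split; assumption|split; [split; [congruence|assumption]|exact Hl']].
Qed.

Lemma geodesic_exists v0 u : exists t, geodesic v0 (u :: t).
Proof.
  destruct tree as [_ [_ [connected_adj _]]].
  destruct (connected_adj u v0) as [q [Hq Hl]].
  apply (walk_shorten_geodesic (l := q)); [apply chain_walk; exact Hq|].
  destruct q as [|a q]; [exact Hl|].
  change (last (a :: q) v0 = v0). rewrite <- Hl at 2. apply last_cons_default.
Qed.

Lemma geodesic_In_root v0 a t : geodesic v0 (a :: t) -> In v0 (a :: t).
Proof. intros [_ [_ Hl]]. rewrite <- Hl at 1. apply In_last_cons. Qed.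

Lemma geodesic_root v0 t : geodesic v0 (v0 :: t) -> t = [].
Proof.
  intros Hg. destruct t as [|a t]; [reflexivity|exfalso].
  pose proof Hg as [Hw [Hr _]].
  pose proof (reduced_walk_NoDup Hw Hr) as Hnd.
  apply NoDup_cons_iff in Hnd as [Hv0 _].
  exact (Hv0 (geodesic_In_root (geodesic_tail Hg))).
Qed.

Lemma geodesic_first_step v0 u a1 t1 a2 t2 :
  geodesic v0 (u :: a1 :: t1) -> geodesic v0 (u :: a2 :: t2) -> a1 = a2.
Proof.
  intros Hg1 Hg2. apply NNPP; intro Ha.
  pose proof Hg1 as [Hw1 [Hr1 _]]. pose proof Hg2 as [Hw2 [Hr2 _]].
  (* glued at u, the two geodesics form a reduced walk visiting v0 twice *)
  assert (Hw : walk adj (rev (a2 :: t2) ++ u :: a1 :: t1)).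
  { apply walk_app. split; [|exact Hw1].
    change (walk adj (rev (u :: a2 :: t2))). apply walk_rev; [apply tree|exact Hw2]. }
  assert (Hr : reduced (rev (a2 :: t2) ++ u :: a1 :: t1)).
  { simpl. rewrite <- app_assoc. apply reduced_app. split.
    - replace (rev t2 ++ [a2; u]) with (rev (u :: a2 :: t2))
        by (simpl; rewrite <- app_assoc; reflexivity).
      apply reduced_rev. exact Hr2.
    - split; [congruence|exact Hr1]. }
  apply (NoDup_app_disjoint (x := v0) (reduced_walk_NoDup Hw Hr)).
  - apply (in_rev (a2 :: t2)), (geodesic_In_root (geodesic_tail Hg2)).
  - right. exact (geodesic_In_root (geodesic_tail Hg1)).
Qed.

Lemma geodesic_unique v0 u t1 t2 :
  geodesic v0 (u :: t1) -> geodesic v0 (u :: t2) -> t1 = t2.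
Proof.
  revert u t2; induction t1 as [|a1 t1 IH]; intros u t2 H1 H2.
  - destruct H1 as [_ [_ Hu]]. simpl in Hu; subst u.
    symmetry. exact (geodesic_root H2).
  - destruct t2 as [|a2 t2].
    + destruct H2 as [_ [_ Hu]]. simpl in Hu; subst u. exact (geodesic_root H1).
    + pose proof (geodesic_first_step H1 H2) as <-. f_equal.
      exact (IH a1 t2 (geodesic_tail H1) (geodesic_tail H2)).
Qed.

End Geodesics.

Definition twist {X Y : Type} (s : X -> X) (z : X + Y) : X + Y :=
  match z with inl x => inl (s x) | inr y => inr y end.

Lemma twist_cancel {X Y : Type} (s s' : X -> X) :
  (forall x, s' (s x) = x) -> forall z : X + Y, twist s' (twist s z) = z.
Proof. intros Hs [x|y]; simpl; congruence. Qed.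

Lemma twist_inj {X Y : Type} (s : X -> X) (z z' : X + Y) :
  (forall x x', s x = s x' -> x = x') -> twist s z = twist s z' -> z = z'.
Proof.
  intros Hinj. destruct z as [x|y], z' as [x'|y']; simpl; try congruence.
  intros [= E]. f_equal. exact (Hinj _ _ E).
Qed.

Section Colourings.

Variables (V X Y : Type) (adj : V -> V -> Prop) (VX : V -> Prop) (c : V -> V -> X + Y).
Hypothesis legal : legal_colouring adj VX c.

Lemma legal_colouring_inj u w w' : adj u w -> adj u w' -> c u w = c u w' -> w = w'.
Proof.
  destruct legal as [HcX [HcY _]].
  destruct (classic (VX u)) as [Hu|Hu];
    [apply (HcX u Hu)|apply (HcY u Hu)].
Qed.

Lemma legal_colouring_twist s u u' w : (VX u <-> VX u') -> adj u w ->
  exists w', adj u' w' /\ c u' w' = twist s (c u w).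
Proof.
  destruct legal as [HcX [HcY _]]. intros Hside Huw.
  destruct (classic (VX u)) as [Hu|Hu].
  - destruct (proj1 (HcX u Hu) w Huw) as [x ->].
    apply (HcX u' (proj1 Hside Hu)).
  - destruct (proj1 (HcY u Hu) w Huw) as [y ->].
    apply (HcY u' (fun Hu' => Hu (proj2 Hside Hu'))).
Qed.

End Colourings.

Section Transport.

Variables (V X Y : Type) (adj : V -> V -> Prop) (VX : V -> Prop) (c : V -> V -> X + Y).
Hypotheses (tree : is_tree adj) (bip : bipartition adj VX)
  (legal : legal_colouring adj VX c).
Variable v0 : V.
Hypothesis root_VX : VX v0.

Let adj_sym : forall u w, adj u w -> adj w u := proj1 tree.

(* [transport s l r]: walks [l] and [r] to [v0], built outwards from [v0] in
   lockstep, such that every outward arc of [r] has the [twist s] of the colour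
   of the corresponding arc of [l]. *)
Inductive transport (s : X -> X) : list V -> list V -> Prop :=
| transport_root : transport s [v0] [v0]
| transport_step u l u' r w w' : transport s (u :: l) (u' :: r) ->
    adj u w -> adj u' w' -> c u' w' = twist s (c u w) ->
    transport s (w :: u :: l) (w' :: u' :: r).

Lemma transport_functional s l r1 r2 :
  transport s l r1 -> transport s l r2 -> r1 = r2.
Proof.
  intros H1; revert r2.
  induction H1 as [|u l u' r w w' H IH Hw Hw' Hc]; intros r2 H2.
  - inversion H2; reflexivity.
  - inversion H2 as [|u0 l0 u0' r0 w0 w0' H0 Hw0 Hw0' Hc0]; subst.
    injection (IH _ H0) as <- <-. f_equal.
    apply (legal_colouring_inj legal Hw' Hw0'). congruence.
Qed.

Lemma transport_side s l r : transport s l r -> (VX (hd v0 l) <-> VX (hd v0 r)).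
Proof.
  induction 1 as [|u l u' r w w' _ IH Hw Hw' _]; simpl in *; [tauto|].
  pose proof (bip Hw). pose proof (bip Hw').
  split; intro h; apply NNPP; intro h'; tauto.
Qed.

Lemma transport_total s u l :
  geodesic adj v0 (u :: l) -> exists u' r, transport s (u :: l) (u' :: r).
Proof.
  revert u; induction l as [|a l IH]; intros u Hg.
  - destruct Hg as [_ [_ Hu]]. simpl in Hu; subst u.
    exists v0, []. constructor.
  - destruct (IH a (geodesic_tail Hg)) as [a' [r Ht]].
    assert (Hau : adj a u) by (apply adj_sym, (proj1 Hg)).
    destruct (legal_colouring_twist legal s (transport_side Ht) Hau) as [u' [Hu' Hc']].
    exists u', (a' :: r). constructor; assumption.
Qed.

Lemma transport_inv s s' l r : (forall x, s' (s x) = x) ->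
  transport s l r -> transport s' r l.
Proof.
  intros Hs. induction 1 as [|u l u' r w w' _ IH Hw Hw' Hc]; constructor; auto.
  rewrite Hc. symmetry. apply twist_cancel, Hs.
Qed.

(* Arcs towards the root are twisted as well: the colour of an arc only
   depends on its terminus, and the root's colour lies in [Y]. *)
Lemma transport_backward s u t l u' t' r :
  transport s (u :: t :: l) (u' :: t' :: r) -> c u' t' = twist s (c u t).
Proof.
  destruct legal as [_ [HcY terminus]].
  intros Ht. inversion Ht as [|a l0 a' r0 w w' Ht0 Ha Ha' Hc]; subst.
  inversion Ht0 as [|p l1 p' r1 z z' _ Hp Hp' Hcp]; subst.
  - rewrite (terminus _ _ _ (adj_sym Ha') (adj_sym Ha)).
    assert (Hu : ~ VX u) by exact (proj1 (bip Ha) root_VX).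
    destruct (proj1 (HcY u Hu) _ (adj_sym Ha)) as [y ->]. reflexivity.
  - rewrite (terminus _ _ _ (adj_sym Ha') Hp'), (terminus _ _ _ (adj_sym Ha) Hp).
    exact Hcp.
Qed.

Lemma transport_geodesic s l r : (forall x x', s x = s x' -> x = x') ->
  transport s l r -> geodesic adj v0 l -> geodesic adj v0 r.
Proof.
  intros Hinj Ht. induction Ht as [|u l u' r w w' Ht IH Hw Hw' Hc]; [tauto|].
  intros Hg. destruct (IH (geodesic_tail Hg)) as [Hwr [Hrr Hlr]].
  split; [split; [apply adj_sym; exact Hw'|exact Hwr]|].
  split; [|exact Hlr].
  destruct r as [|t' r]; [exact I|]. split; [|exact Hrr].
  destruct l as [|t l]; [inversion Ht|].
  intros <-. apply (proj1 (proj2 Hg)).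
  apply (legal_colouring_inj legal Hw (proj1 (proj2 (proj1 Hg)))).
  assert (Htwist : twist s (c u w) = twist s (c u t)).
  { rewrite <- Hc. exact (transport_backward Ht). }
  exact (twist_inj Hinj Htwist).
Qed.

(* The image of [u] under the twisting automorphism: transport the geodesic
   from [u] to [v0]. *)
Definition transported s u u' : Prop :=
  exists t r, geodesic adj v0 (u :: t) /\ transport s (u :: t) (u' :: r).

Lemma transported_total s u : exists u', transported s u u'.
Proof.
  destruct (geodesic_exists tree v0 u) as [t Hg].
  destruct (transport_total s Hg) as [u' [r Ht]].
  exists u', t, r. split; assumption.
Qed.

Lemma transported_functional s u a b :
  transported s u a -> transported s u b -> a = b.
Proof.
  intros [t1 [r1 [Hg1 Ht1]]] [t2 [r2 [Hg2 Ht2]]].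
  rewrite (geodesic_unique tree Hg1 Hg2) in Ht1.
  now injection (transport_functional Ht1 Ht2).
Qed.

Lemma transported_inv s s' u u' : (forall x, s' (s x) = x) ->
  transported s u u' -> transported s' u' u.
Proof.
  intros Hs [t [r [Hg Ht]]]. exists r, t. split.
  - refine (transport_geodesic _ Ht Hg).
    intros x x' E. rewrite <- (Hs x), <- (Hs x'), E. reflexivity.
  - exact (transport_inv Hs Ht).
Qed.

Lemma transported_side s u u' : transported s u u' -> (VX u' <-> VX u).
Proof. intros [t [r [_ Ht]]]. symmetry. exact (transport_side Ht). Qed.

Lemma transported_adj s u w a b : adj u w ->
  transported s u a -> transported s w b -> adj a b /\ c a b = twist s (c u w).
Proof.
  intros Huw [t [r [Hg Ht]]] Hb.
  destruct (classic (exists t', t = w :: t')) as [[t' ->]|Hout].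
  - (* [w] is the parent of [u] *)
    inversion Ht as [|w0 l0 b' r' z z' Ht' Hw0 Hb' Hc]; subst.
    assert (Hb0 : transported s w b')
      by (exists t', r'; split; [exact (geodesic_tail Hg)|exact Ht']).
    rewrite <- (transported_functional Hb0 Hb).
    split; [apply adj_sym; exact Hb'|exact (transport_backward Ht)].
  - (* [u] is the parent of [w] *)
    destruct (legal_colouring_twist legal s (transport_side Ht) Huw) as [b' [Hb' Hc]].
    assert (Hg' : geodesic adj v0 (w :: u :: t)).
    { destruct Hg as [Hw [Hr Hl]].
      split; [split; [apply adj_sym; exact Huw|exact Hw]|split; [|exact Hl]].
      destruct t as [|d t]; [exact I|].
      split; [intros ->; apply Hout; eauto|exact Hr]. }
    assert (Hb0 : transported s w b')
      by (exists (u :: t), (a :: r); split; [exact Hg'|constructor; assumption]).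
    rewrite <- (transported_functional Hb0 Hb). split; assumption.
Qed.

Theorem twist_automorphism s s' :
  (forall x, s' (s x) = x) -> (forall x, s (s' x) = x) ->
  exists g, is_aut adj g /\ g v0 = v0 /\ (forall u, VX (g u) <-> VX u) /\
    (forall u w, adj u w -> c (g u) (g w) = twist s (c u w)).
Proof.
  intros Hs's Hss'.
  destruct (choice (transported s) (transported_total s)) as [g Hg].
  destruct (choice (transported s') (transported_total s')) as [g' Hg'].
  assert (Hg'g : forall u, g' (g u) = u).
  { intro u. exact (transported_functional (Hg' (g u)) (transported_inv Hs's (Hg u))). }
  assert (Hgg' : forall u, g (g' u) = u).
  { intro u. exact (transported_functional (Hg (g' u)) (transported_inv Hss' (Hg' u))). }
  exists g. split; [split|split; [|split]].
  - exists g'. split; assumption.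
  - intros u w. split.
    + intro Huw. exact (proj1 (transported_adj Huw (Hg u) (Hg w))).
    + intro Huw. rewrite <- (Hg'g u), <- (Hg'g w).
      exact (proj1 (transported_adj Huw (Hg' (g u)) (Hg' (g w)))).
  - refine (transported_functional (Hg v0) _).
    exists [], []. split; [repeat split|constructor].
  - intro u. exact (transported_side (Hg u)).
  - intros u w Huw. exact (proj2 (transported_adj Huw (Hg u) (Hg w))).
Qed.

End Transport.

Section LocalActionGroups.

Variables (V X Y : Type) (adj : V -> V -> Prop) (VX : V -> Prop) (c : V -> V -> X + Y)
  (M : (X -> X) -> Prop) (N : (Y -> Y) -> Prop).
Hypotheses (HM : perm_group M) (HN : perm_group N).

Lemma U_c_adj g u w : U_c adj VX c M N g -> adj u w -> adj (g u) (g w).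
Proof. intros [[_ Hadj] _] Huw. exact (proj1 (Hadj u w) Huw). Qed.

Lemma U_c_colour_X g v w x : U_c adj VX c M N g -> VX v -> adj v w -> c v w = inl x ->
  exists s, M s /\ c (g v) (g w) = inl (s x).
Proof.
  intros [_ [_ [HlocX _]]] Hv Hvw Hx.
  destruct (HlocX v Hv) as [s [Ms Hs]]. exists s. split; [exact Ms|exact (Hs w x Hvw Hx)].
Qed.

Lemma U_c_comp g h :
  U_c adj VX c M N g -> U_c adj VX c M N h -> U_c adj VX c M N (fun v => h (g v)).
Proof.
  intros [[[gi [g1 g2]] gadj] [gVX [gX gY]]] [[[hi [h1 h2]] hadj] [hVX [hX hY]]].
  split; [split|split; [|split]].
  - exists (fun v => gi (hi v)). split; intro v; congruence.
  - intros u w. rewrite gadj, hadj. reflexivity.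
  - intro v. rewrite hVX, gVX. reflexivity.
  - intros v Hv. destruct (gX v Hv) as [s [Ms Hs]].
    destruct (hX (g v) (proj2 (gVX v) Hv)) as [s' [Ms' Hs']].
    exists (fun x => s' (s x)). split; [apply HM; assumption|].
    intros w x Hw Hx. apply Hs'; [exact (proj1 (gadj v w) Hw)|]. apply Hs; assumption.
  - intros v Hv. destruct (gY v Hv) as [s [Ms Hs]].
    destruct (hY (g v) (fun Hgv => Hv (proj1 (gVX v) Hgv))) as [s' [Ms' Hs']].
    exists (fun y => s' (s y)). split; [apply HN; assumption|].
    intros w y Hw Hy. apply Hs'; [exact (proj1 (gadj v w) Hw)|]. apply Hs; assumption.
Qed.

Lemma U_c_twist_fix (tree : is_tree adj) (bip : bipartition adj VX)
  (legal : legal_colouring adj VX c) v0 s :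
  VX v0 -> M s -> exists h, U_c adj VX c M N h /\ h v0 = v0 /\
    (forall u w, adj u w -> c (h u) (h w) = twist s (c u w)).
Proof.
  intros Hv0 Ms.
  destruct (proj2 (proj2 HM) s Ms) as [s' [_ [Hs's Hss']]].
  destruct (twist_automorphism tree bip legal Hv0 Hs's Hss')
    as [h [Haut [Hh0 [Hside Hcol]]]].
  exists h. split; [|split; assumption].
  split; [exact Haut|split; [exact Hside|split]].
  - intros v _. exists s. split; [exact Ms|].
    intros w x Hvw Hx. rewrite (Hcol v w Hvw), Hx. reflexivity.
  - intros v _. exists (fun y => y). split; [exact (proj1 HN)|].
    intros w y Hvw Hy. rewrite (Hcol v w Hvw), Hy. reflexivity.
Qed.

End LocalActionGroups.

Theorem lemma3p10 (X Y V : Type)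
  (HX : exists x1 x2 : X, x1 <> x2) (HY : exists y1 y2 : Y, y1 <> y2)
  (M : (X -> X) -> Prop) (N : (Y -> Y) -> Prop)
  (HM : perm_group M) (HN : perm_group N)
  (HMnt : nontrivial_group M) (HNnt : nontrivial_group N)
  (adj : V -> V -> Prop) (VX : V -> Prop)
  (Htree : is_tree adj) (Hbip : bipartition adj VX)
  (c : V -> V -> X + Y) (Hc : legal_colouring adj VX c)
  (v1 v2 w1 w2 : V)
  (Hv1 : VX v1) (Hv2 : VX v2) (Hw1 : ~ VX w1) (Hw2 : ~ VX w2)
  (He1 : adj v1 w1) (He2 : adj v2 w2) :
  (exists g, U_c adj VX c M N g /\
     ((g v1 = v2 /\ g w1 = w2) \/ (g v1 = w2 /\ g w1 = v2)))
  <->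
  ((exists g, U_c adj VX c M N g /\ g v1 = v2) /\
   (exists g, U_c adj VX c M N g /\ g w1 = w2)).
Proof.
  split.
  - intros [g [Ug [[E1 E2]|[E1 _]]]].
    + split; exists g; auto.
    + exfalso. apply Hw2. rewrite <- E1. apply (proj1 (proj2 Ug)). exact Hv1.
  - intros [[g1 [U1 E1]] [g2 [U2 E2]]].
    destruct (proj1 (proj1 Hc v1 Hv1) w1 He1) as [x Hx].
    destruct (U_c_colour_X U1 Hv1 He1 Hx) as [s1 [Ms1 Hcol1]].
    destruct (U_c_colour_X U2 Hv1 He1 Hx) as [s2 [Ms2 Hcol2]].
    rewrite E1 in Hcol1. rewrite E2 in Hcol2.
    assert (Hvw1 : adj v2 (g1 w1)) by (rewrite <- E1; exact (U_c_adj U1 He1)).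
    assert (Hvw2 : c v2 w2 = inl (s2 x)).
    { rewrite <- Hcol2. apply (proj2 (proj2 Hc)); [exact He2|].
      rewrite <- E2. exact (U_c_adj U2 He1). }
    destruct (proj2 (proj2 HM) s1 Ms1) as [s1' [Ms1' [Hs1's1 _]]].
    (* h fixes v2 and moves the colour s1 x of the arc (v2, g1 w1) to s2 x *)
    destruct (U_c_twist_fix HM HN Htree Hbip Hc (s := fun x => s2 (s1' x)) Hv2)
      as [h [Uh [Hh0 Hhc]]]; [apply HM; assumption|].
    exists (fun v => h (g1 v)). split; [exact (U_c_comp HM HN U1 Uh)|left].
    split; [rewrite E1; exact Hh0|].
    assert (Hvh : adj v2 (h (g1 w1))) by (rewrite <- Hh0 at 1; exact (U_c_adj Uh Hvw1)).
    apply (legal_colouring_inj Hc Hvh He2).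
    rewrite <- Hh0 at 1. rewrite (Hhc _ _ Hvw1), Hcol1, Hvw2. simpl.
    rewrite Hs1's1. reflexivity.
Qed.
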